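(* Let $\mathbf X=(X_1,\dots,X_r)$ have the UGAT distribution with parameters $n,k,\beta,\overline{\alpha}_r$, with hazard rate components $h_i$ as defined below. Abbreviate $M(\gamma)=M^{(r)}_n(\gamma;k;\overline{\alpha}_r)$, and for $\mathbf x,\mathbf t\in\mathbb N_0^r$ write $X_{\mathbf x}=x_1+\cdots+x_r$, $X'_{\mathbf x}=X_{\mathbf x}+1$ and $T_{\mathbf t}=t_1+\cdots+t_r$. Then the UGAT distribution is MIFR if and only if for all $\mathbf x,\mathbf t\in\mathbb N_0^r$ $$\frac{M(\beta+X'_{\mathbf x}+T_{\mathbf t})}{M(\beta+X_{\mathbf x}+T_{\mathbf t})}\le\frac{M(\beta+X'_{\mathbf x})}{M(\beta+X_{\mathbf x})},$$ and it is MDFR if and only if the reverse inequality $\ge$ holds for all $\mathbf x,\mathbf t\in\mathbb N_0^r$.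
   Context: Fix integers $r\ge1$, $n\ge0$, a real number $k$ with $rk>n$, a real $\beta>0$ and $\overline{\alpha}_r=(\alpha_0,\dots,\alpha_{r-1})\in(0,\infty)^r$. For $\gamma>0$ and a vector $\overline{\alpha}'=(\alpha'_0,\dots,\alpha'_{r-1})$ of positive reals define $$M^{(r)}_n(\gamma;k;\overline{\alpha}')=C\sum_{\ell_1,\dots,\ell_r=0}^{\infty}\frac{(\alpha'_0)^{\ell_1}(\alpha'_1)^{\ell_2}\cdots(\alpha'_{r-1})^{\ell_r}}{(\ell_1+\cdots+\ell_r+\gamma)^{rk-n}},\qquad C=\frac{(-1)^r2^{r(1-k)}n!}{(n-rk)!},$$ where $C$ is regarded as a fixed nonzero real constant not depending on $\gamma$ or $\overline{\alpha}'$, and the parameters are assumed to be such that all series involved converge (e.g. all $\alpha_j<1$). A random vector $\mathbf X=(X_1,\dots,X_r)$ with values in $\mathbb N_0^r$ has the UGAT distribution with parameters $n,k,\beta,\overline{\alpha}_r$ if for all $x_1,\dots,x_r\in\mathbb N_0$ $$P(X_1=x_1,\dots,X_r=x_r)=\frac{C\,\alpha_0^{x_1}\alpha_1^{x_2}\cdots\alpha_{r-1}^{x_r}}{(x_1+\cdots+x_r+\beta)^{rk-n}\,M^{(r)}_n(\beta;k;\overline{\alpha}_r)}.$$ With $R(x_1,\dots,x_r)=P(X_1\ge x_1,\dots,X_r\ge x_r)$, the hazard rate components are $h_i(\mathbf x)=1-R(x_1,\dots,x_i+1,\dots,x_r)/R(x_1,\dots,x_r)$, $i=1,\dots,r$.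 The distribution is MIFR (multivariate increasing failure rate) if $h_i(\mathbf x+\mathbf t)\ge h_i(\mathbf x)$ for all $i$ and all $\mathbf x,\mathbf t\in\mathbb N_0^r$, and MDFR (multivariate decreasing failure rate) if $h_i(\mathbf x+\mathbf t)\le h_i(\mathbf x)$ for all $i$ and all $\mathbf x,\mathbf t\in\mathbb N_0^r$. *)

From Stdlib Require Import Reals Lra Lia ClassicalEpsilon.
Open Scope R_scope.

(* Points of N_0^r are represented by functions x : nat -> nat; only the
   coordinates x 0, ..., x (r-1) are ever used (coordinate x_{j+1} of the
   paper is x j here). *)

Fixpoint nsum (r : nat) (x : nat -> nat) : nat :=
  match r with O => O | S r' => (nsum r' x + x r')%nat end.

Fixpoint weight (r : nat) (alpha : nat -> R) (x : nat -> nat) : R :=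
  match r with O => 1 | S r' => weight r' alpha x * alpha r' ^ x r' end.

Definition cons_fn (l : nat) (z : nat -> nat) : nat -> nat :=
  fun j => match j with O => l | S j' => z j' end.

(* Finite box partial sum  sum_{z in {0..N}^m} f z  (z j = 0 for j >= m). *)
Fixpoint box (m N : nat) (f : (nat -> nat) -> R) : R :=
  match m with
  | O => f (fun _ => O)
  | S m' => sum_f_R0 (fun l => box m' N (fun z => f (cons_fn l z))) N
  end.

(* Value of a convergent real sequence (the limit; arbitrary otherwise). *)
Definition lim_seq (u : nat -> R) : R :=
  epsilon (inhabits 0) (fun l => Un_cv u l).

(* Value of the r-fold series sum_{z in N_0^r} f z, taken as the limit of
   the box partial sums (for nonnegative terms this is the unordered sum). *)
Definition mseries (r : nat) (f : (nat -> nat) -> R) : R :=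
  lim_seq (fun N => box r N f).

Definition ugat_exp (r n : nat) (k : R) : R := INR r * k - INR n.

(* General term of M^{(r)}_n(gamma;k;alpha') (without the constant C). *)
Definition Mterm (r n : nat) (k : R) (alpha : nat -> R) (gamma : R)
  (z : nat -> nat) : R :=
  weight r alpha z / Rpower (INR (nsum r z) + gamma) (ugat_exp r n k).

Definition Mfun (C : R) (r n : nat) (k : R) (alpha : nat -> R) (gamma : R) : R :=
  C * mseries r (Mterm r n k alpha gamma).

Definition ugat_pmf (C : R) (r n : nat) (k beta : R) (alpha : nat -> R)
  (x : nat -> nat) : R :=
  C * weight r alpha x /
  (Rpower (INR (nsum r x) + beta) (ugat_exp r n k) * Mfun C r n k alpha beta).

Definition addv (x t : nat -> nat) : nat -> nat := fun j => (x j + t j)%nat.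

Definition unitv (i : nat) : nat -> nat := fun j => if Nat.eqb j i then 1%nat else 0%nat.

(* Survival function R(x) = P(X_1 >= x_1, ..., X_r >= x_r) = sum_{z} P(X = x + z). *)
Definition ugat_surv (C : R) (r n : nat) (k beta : R) (alpha : nat -> R)
  (x : nat -> nat) : R :=
  mseries r (fun z => ugat_pmf C r n k beta alpha (addv x z)).

(* Hazard rate component h_i (i = 0..r-1 here, i.e. paper's i+1). *)
Definition hazard (C : R) (r n : nat) (k beta : R) (alpha : nat -> R)
  (i : nat) (x : nat -> nat) : R :=
  1 - ugat_surv C r n k beta alpha (addv x (unitv i)) / ugat_surv C r n k beta alpha x.

Definition MIFR (C : R) (r n : nat) (k beta : R) (alpha : nat -> R) : Prop :=
  forall (i : nat) (x t : nat -> nat), (i < r)%nat ->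
    hazard C r n k beta alpha i x <= hazard C r n k beta alpha i (addv x t).

Definition MDFR (C : R) (r n : nat) (k beta : R) (alpha : nat -> R) : Prop :=
  forall (i : nat) (x t : nat -> nat), (i < r)%nat ->
    hazard C r n k beta alpha i (addv x t) <= hazard C r n k beta alpha i x.

(* The survival function of a UGAT vector factorises: shifting the summation
   index by x pulls out the weight of x and shifts the parameter of M, so that
   R(x) = alpha^x M(beta + |x|) / M(beta).  Hence every hazard component is
   h_i(x) = 1 - alpha_i M(beta + |x| + 1) / M(beta + |x|), which depends on x
   only through |x|, and monotonicity of h_i along x <= x + t is exactly
   monotonicity of this ratio of M. *)

From Stdlib Require Import Reals Lra Lia ClassicalEpsilon.
Open Scope R_scope.

Lemma nsum_addv r x t : nsum r (addv x t) = (nsum r x + nsum r t)%nat.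
Proof. induction r; simpl; unfold addv in *; lia. Qed.

Lemma weight_addv r a x t : weight r a (addv x t) = weight r a x * weight r a t.
Proof.
  induction r; simpl; [ring |].
  rewrite IHr; unfold addv; rewrite pow_add; ring.
Qed.

Lemma weight_pos r a x : (forall j, (j < r)%nat -> 0 < a j) -> 0 < weight r a x.
Proof.
  induction r; simpl; intros Ha; [lra |].
  apply Rmult_lt_0_compat; [apply IHr; intros; apply Ha; lia |].
  apply pow_lt, Ha; lia.
Qed.

Lemma unitv_eq i j : unitv i j = if Nat.eqb j i then 1%nat else 0%nat.
Proof. reflexivity. Qed.

Lemma nsum_unitv r i : nsum r (unitv i) = if Nat.ltb i r then 1%nat else 0%nat.
Proof.
  induction r; simpl; [reflexivity |].
  rewrite IHr, unitv_eq.
  destruct (Nat.eqb_spec r i), (Nat.ltb_spec i r), (Nat.ltb_spec i (S r)); lia.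
Qed.

Lemma weight_unitv r a i : weight r a (unitv i) = if Nat.ltb i r then a i else 1.
Proof.
  induction r; simpl; [reflexivity |].
  rewrite IHr, unitv_eq.
  destruct (Nat.eqb_spec r i), (Nat.ltb_spec i r), (Nat.ltb_spec i (S r));
    subst; simpl; try lia; ring.
Qed.

Lemma box_ext m N f g : (forall z, f z = g z) -> box m N f = box m N g.
Proof.
  revert f g; induction m; intros f g Hfg; simpl; [apply Hfg |].
  apply sum_eq; intros; apply IHm; intros; apply Hfg.
Qed.

Lemma box_scal m N c f : box m N (fun z => c * f z) = c * box m N f.
Proof.
  revert f; induction m; intros f; simpl; [reflexivity |].
  rewrite scal_sum.
  apply sum_eq; intros l _; rewrite (IHm (fun z => f (cons_fn l z))); ring.
Qed.

Lemma sum_f_R0_pos g N : (forall l, 0 < g l) -> 0 < sum_f_R0 g N.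
Proof.
  intros Hg; induction N; simpl; [apply Hg |].
  pose proof (Hg (S N)); lra.
Qed.

Lemma box_pos m N f : (forall z, 0 < f z) -> 0 < box m N f.
Proof.
  revert f; induction m; intros f Hf; simpl; [apply Hf |].
  apply sum_f_R0_pos; intros; apply IHm; intros; apply Hf.
Qed.

Lemma box_le_succ m N f : (forall z, 0 < f z) -> box m N f <= box m (S N) f.
Proof.
  revert f; induction m; intros f Hf; simpl; [lra |].
  pose proof (box_pos m (S N) (fun z => f (cons_fn (S N) z)) (fun z => Hf _)).
  enough (sum_f_R0 (fun l => box m N (fun z => f (cons_fn l z))) N <=
          sum_f_R0 (fun l => box m (S N) (fun z => f (cons_fn l z))) N) by lra.
  apply sum_Rle; intros; apply IHm; auto.
Qed.

Lemma lim_seq_eq u l : Un_cv u l -> lim_seq u = l.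
Proof.
  intros Hu; unfold lim_seq.
  apply (UL_sequence u); [| exact Hu].
  exact (epsilon_spec (inhabits 0) (fun l => Un_cv u l) (ex_intro _ l Hu)).
Qed.

Lemma mseries_eq r f l : Un_cv (fun N => box r N f) l -> mseries r f = l.
Proof. apply lim_seq_eq. Qed.

Lemma box_cv_scal r c f l :
  Un_cv (fun N => box r N f) l -> Un_cv (fun N => box r N (fun z => c * f z)) (c * l).
Proof.
  intros Hl.
  assert (Hc : Un_cv (fun _ => c) c)
    by (intros e He; exists 0%nat; intros; rewrite R_dist_eq; exact He).
  eapply Un_cv_ext; [| exact (CV_mult _ _ _ _ Hc Hl)].
  intros N; symmetry; apply box_scal.
Qed.

(* The box partial sums increase, so their limit dominates the first one. *)
Lemma mseries_pos r f l :
  (forall z, 0 < f z) -> Un_cv (fun N => box r N f) l -> 0 < mseries r f.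
Proof.
  intros Hf Hl; rewrite (mseries_eq _ _ _ Hl).
  apply Rlt_le_trans with (box r 0 f); [apply box_pos; exact Hf |].
  apply (growing_ineq (fun N => box r N f)); [| exact Hl].
  intros N; apply box_le_succ; exact Hf.
Qed.

Lemma Mterm_pos r n k alpha gamma z :
  (forall j, (j < r)%nat -> 0 < alpha j) -> 0 < Mterm r n k alpha gamma z.
Proof.
  intros Ha; unfold Mterm, Rpower.
  apply Rdiv_lt_0_compat; [apply weight_pos; exact Ha | apply exp_pos].
Qed.

Section Hazard.

Variables (C : R) (r n : nat) (k beta : R) (alpha : nat -> R).
Hypothesis hbeta : 0 < beta.
Hypothesis halpha : forall j : nat, (j < r)%nat -> 0 < alpha j.
Hypothesis hC : C <> 0.
Hypothesis hconv : forall gamma : R, 0 < gamma ->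
  exists l : R, Un_cv (fun N => box r N (Mterm r n k alpha gamma)) l.

Lemma mseries_Mterm_pos gamma : 0 < gamma -> 0 < mseries r (Mterm r n k alpha gamma).
Proof.
  intros Hg; destruct (hconv gamma Hg) as [l Hl].
  apply (mseries_pos _ _ l); [intros; apply Mterm_pos; exact halpha | exact Hl].
Qed.

Lemma ugat_pmf_addv x z :
  ugat_pmf C r n k beta alpha (addv x z) =
  weight r alpha x / mseries r (Mterm r n k alpha beta) *
  Mterm r n k alpha (beta + INR (nsum r x)) z.
Proof.
  pose proof (mseries_Mterm_pos beta hbeta).
  unfold ugat_pmf, Mfun.
  set (S := mseries r (Mterm r n k alpha beta)) in *.
  unfold Mterm; rewrite nsum_addv, weight_addv, plus_INR.
  replace (INR (nsum r x) + INR (nsum r z) + beta)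
    with (INR (nsum r z) + (beta + INR (nsum r x))) by ring.
  assert (0 < Rpower (INR (nsum r z) + (beta + INR (nsum r x))) (ugat_exp r n k))
    by apply exp_pos.
  field; repeat split; auto; lra.
Qed.

Lemma ugat_surv_eq x :
  ugat_surv C r n k beta alpha x =
  weight r alpha x * mseries r (Mterm r n k alpha (beta + INR (nsum r x)))
    / mseries r (Mterm r n k alpha beta).
Proof.
  assert (Hg : 0 < beta + INR (nsum r x)) by (pose proof (pos_INR (nsum r x)); lra).
  destruct (hconv _ Hg) as [l Hl].
  pose proof (mseries_Mterm_pos beta hbeta).
  unfold ugat_surv; rewrite (mseries_eq _ _ l Hl).
  replace (weight r alpha x * l / mseries r (Mterm r n k alpha beta))
    with (weight r alpha x / mseries r (Mterm r n k alpha beta) * l) by (field; lra).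
  apply mseries_eq.
  eapply Un_cv_ext; [| exact (box_cv_scal _ _ _ _ Hl)].
  intros N; apply box_ext; intros z; symmetry; apply ugat_pmf_addv.
Qed.

Lemma hazard_eq i x : (i < r)%nat ->
  hazard C r n k beta alpha i x =
  1 - alpha i * (Mfun C r n k alpha (beta + INR (nsum r x) + 1) /
                 Mfun C r n k alpha (beta + INR (nsum r x))).
Proof.
  intros hi; unfold hazard, Mfun.
  rewrite !ugat_surv_eq, nsum_addv, weight_addv, nsum_unitv, weight_unitv, plus_INR.
  apply Nat.ltb_lt in hi; rewrite hi; simpl INR.
  pose proof (pos_INR (nsum r x)).
  pose proof (mseries_Mterm_pos beta hbeta).
  pose proof (mseries_Mterm_pos (beta + INR (nsum r x)) ltac:(lra)).
  pose proof (mseries_Mterm_pos (beta + INR (nsum r x) + 1) ltac:(lra)).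
  pose proof (weight_pos r alpha x halpha).
  replace (beta + (INR (nsum r x) + 1)) with (beta + INR (nsum r x) + 1) by ring.
  field; repeat split; lra.
Qed.

Lemma hazard_addv_eq i x t : (i < r)%nat ->
  hazard C r n k beta alpha i (addv x t) =
  1 - alpha i *
      (Mfun C r n k alpha (beta + INR (nsum r x) + 1 + INR (nsum r t)) /
       Mfun C r n k alpha (beta + INR (nsum r x) + INR (nsum r t))).
Proof.
  intros hi; rewrite hazard_eq, nsum_addv, plus_INR by exact hi.
  replace (beta + (INR (nsum r x) + INR (nsum r t)) + 1)
    with (beta + INR (nsum r x) + 1 + INR (nsum r t)) by ring.
  rewrite <- Rplus_assoc; reflexivity.
Qed.

End Hazard.

Lemma Rminus_mult_le_iff a u v : 0 < a -> (1 - a * u <= 1 - a * v <-> v <= u).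
Proof.
  intros Ha; split; intros Huv.
  - apply Rmult_le_reg_l with a; lra.
  - enough (a * v <= a * u) by lra.
    apply Rmult_le_compat_l; lra.
Qed.

Theorem mainTheorem10 (C : R) (r n : nat) (k beta : R) (alpha : nat -> R)
  (hr : (1 <= r)%nat)
  (hrk : INR n < INR r * k)
  (hbeta : 0 < beta)
  (halpha : forall j : nat, (j < r)%nat -> 0 < alpha j)
  (hC : C <> 0)
  (hconv : forall gamma : R, 0 < gamma ->
     exists l : R, Un_cv (fun N => box r N (Mterm r n k alpha gamma)) l) :
  let M := Mfun C r n k alpha in
  (MIFR C r n k beta alpha <->
     forall x t : nat -> nat,
       M (beta + INR (nsum r x) + 1 + INR (nsum r t)) / M (beta + INR (nsum r x) + INR (nsum r t))
       <= M (beta + INR (nsum r x) + 1) / M (beta + INR (nsum r x))) /\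
  (MDFR C r n k beta alpha <->
     forall x t : nat -> nat,
       M (beta + INR (nsum r x) + 1) / M (beta + INR (nsum r x))
       <= M (beta + INR (nsum r x) + 1 + INR (nsum r t)) / M (beta + INR (nsum r x) + INR (nsum r t))).
Proof.
  intros M.
  (* Every component compares the same two ratios of M, so component 0 suffices. *)
  assert (Hcomp : forall i x t, (i < r)%nat ->
    (hazard C r n k beta alpha i x <= hazard C r n k beta alpha i (addv x t) <->
     M (beta + INR (nsum r x) + 1 + INR (nsum r t)) / M (beta + INR (nsum r x) + INR (nsum r t))
     <= M (beta + INR (nsum r x) + 1) / M (beta + INR (nsum r x))) /\
    (hazard C r n k beta alpha i (addv x t) <= hazard C r n k beta alpha i x <->
     M (beta + INR (nsum r x) + 1) / M (beta + INR (nsum r x))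
     <= M (beta + INR (nsum r x) + 1 + INR (nsum r t)) / M (beta + INR (nsum r x) + INR (nsum r t)))).
  { intros i x t hi.
    rewrite hazard_eq, hazard_addv_eq by auto.
    split; apply Rminus_mult_le_iff, halpha, hi. }
  assert (h0 : (0 < r)%nat) by lia.
  unfold MIFR, MDFR; split; split.
  - intros H x t; apply (Hcomp 0%nat x t h0), H, h0.
  - intros H i x t hi; apply (Hcomp i x t hi), H.
  - intros H x t; apply (Hcomp 0%nat x t h0), H, h0.
  - intros H i x t hi; apply (Hcomp i x t hi), H.
Qed.
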